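(* Let $n\ge1$. For every $\mathcal C\in\mathbf{Rel}^n\mathbf{Cat}$, the unit map $\eta N\mathcal C\colon N\mathcal C\to NKN\mathcal C$ of the adjunction $K\dashv N$ is an isomorphism in $\mathrm{s}^n\mathcal S$.
   Context: An $n$-relative category $\mathcal C=(a\mathcal C,v_1\mathcal C,\dots,v_n\mathcal C,w\mathcal C)$ consists of a category $a\mathcal C$ and subcategories $v_1\mathcal C,\dots,v_n\mathcal C,w\mathcal C\subset a\mathcal C$, each containing all objects, with $w\mathcal C\subset v_i\mathcal C$ for all $i$, such that (i) every map of $a\mathcal C$ is a finite composite of maps in the $v_i\mathcal C$, and (ii) every relation in $a\mathcal C$ is a consequence of the commutativity of squares $y_2x_1=x_2y_1$ with $x_1,x_2\in v_i\mathcal C$, $y_1,y_2\in v_j\mathcal C$ ($i,j$ not necessarily distinct). $\mathbf{Rel}^n\mathbf{Cat}$ is the category of small $n$-relative categories and functors of ambient categories preserving $w$ and each $v_i$. For $p\ge0$, $\mathbf p$ is the poset $0\to\cdots\to p$ and $|\mathbf p|$ its discrete subcategory; $\mathbf p_n^{v_n}\times\cdots\times\mathbf p_1^{v_1}\times\mathbf q^w$ is the $n$-relative category with ambient category $\mathbf p_n\times\cdots\times\mathbf p_1\times\mathbf q$, $w=|\mathbf p_n|\times\cdots\times|\mathbf p_1|\times\mathbf q$, $v_i=|\mathbf p_n|\times\cdots\times\mathbf p_i\times\cdots\times|\mathbf p_1|\times\mathbf q$. $\mathrm{s}^n\mathcal S$ is the category of $(n+1)$-simplicial sets with standard multisimplices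 $\Delta[p_n,\dots,p_1,q]$. The $n$-simplicial nerve $N\mathcal C$ has as $(p_n,\dots,p_1,q)$-simplices the relative functors $\mathbf p_n^{v_n}\times\cdots\times\mathbf p_1^{v_1}\times\mathbf q^w\to\mathcal C$; $K$ is its left adjoint, the colimit-preserving functor with $K\Delta[p_n,\dots,p_1,q]=\mathbf p_n^{v_n}\times\cdots\times\mathbf p_1^{v_1}\times\mathbf q^w$. *)

From Stdlib Require Import FunctionalExtensionality ProofIrrelevance.
From HB Require Import structures.
From mathcomp Require Import all_boot.

Set Implicit Arguments.
Unset Strict Implicit.
Unset Printing Implicit Defensive.

(* Small categories (strict: hom-equality is Leibniz equality).        *)
Record Cat := Cat_ {
  ob : Type;
  hom : ob -> ob -> Type;
  idm : forall x, hom x x;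
  cmp : forall x y z, hom y z -> hom x y -> hom x z;
  cmp_id_l : forall x y (f : hom x y), cmp (idm y) f = f;
  cmp_id_r : forall x y (f : hom x y), cmp f (idm x) = f;
  cmp_assoc : forall x y z t (f : hom x y) (g : hom y z) (h : hom z t),
      cmp h (cmp g f) = cmp (cmp h g) f }.

Arguments hom : clear implicits.
Arguments idm {c} x.
Arguments cmp {c x y z} g f.

(* Finite composable strings of maps, each labelled by an index i : 'I_n
   (meaning: "this map is regarded as a map of v_i"). *)
Inductive path (n : nat) (C : Cat) : ob C -> ob C -> Type :=
| pnil : forall x, @path n C x x
| pcons : forall x y z, 'I_n -> hom C y z -> @path n C x y -> @path n C x z.

Arguments path : clear implicits.
Arguments pnil {n C} x.
Arguments pcons {n C x y z} i f p.

Fixpoint peval n C x y (p : path n C x y) : hom C x y :=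
  match p with
  | pnil x => idm x
  | pcons _ _ _ _ f q => cmp f (peval q)
  end.

Fixpoint pvalid n C (v : 'I_n -> forall x y, hom C x y -> Prop) x y
    (p : path n C x y) : Prop :=
  match p with
  | pnil _ => True
  | pcons _ _ _ i f q => v i _ _ f /\ pvalid v q
  end.

(* concatenation: [pcat r s] is "r after s" *)
Fixpoint pcat n C x y z (r : path n C y z) : path n C x y -> path n C x z :=
  match r in path _ _ y' z' return path n C x y' -> path n C x z' with
  | pnil _ => fun s => s
  | pcons _ _ _ i f q => fun s => pcons i f (pcat q s)
  end.

Inductive sqrel n C (v : 'I_n -> forall x y, hom C x y -> Prop) :
    forall x y, path n C x y -> path n C x y -> Prop :=
| sqr_refl : forall x y (p : path n C x y), sqrel v p p
| sqr_sym : forall x y (p q : path n C x y), sqrel v p q -> sqrel v q p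
| sqr_trans : forall x y (p q r : path n C x y),
    sqrel v p q -> sqrel v q r -> sqrel v p r
| sqr_unit : forall x (i : 'I_n), sqrel v (pcons i (idm x) (pnil x)) (pnil x)
| sqr_square : forall a b c d (i j : 'I_n)
    (x1 : hom C a b) (y2 : hom C b d) (y1 : hom C a c) (x2 : hom C c d),
    v i _ _ x1 -> v i _ _ x2 -> v j _ _ y1 -> v j _ _ y2 ->
    cmp y2 x1 = cmp x2 y1 ->
    sqrel v (pcons j y2 (pcons i x1 (pnil a))) (pcons i x2 (pcons j y1 (pnil a)))
| sqr_ctx : forall x y z t (r : path n C z t) (p q : path n C y z)
    (s : path n C x y),
    sqrel v p q -> sqrel v (pcat r (pcat p s)) (pcat r (pcat q s)).

Record RelCat (n : nat) := RelCat_ {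
  amb : Cat;
  vsub : 'I_n -> forall x y, hom amb x y -> Prop;
  wsub : forall x y, hom amb x y -> Prop;
  vsub_id : forall i x, vsub i (idm x);
  vsub_cmp : forall i x y z (f : hom amb x y) (g : hom amb y z),
      vsub i f -> vsub i g -> vsub i (cmp g f);
  wsub_id : forall x, wsub (idm x);
  wsub_cmp : forall x y z (f : hom amb x y) (g : hom amb y z),
      wsub f -> wsub g -> wsub (cmp g f);
  wsub_vsub : forall i x y (f : hom amb x y), wsub f -> vsub i f;
  (* (i) every map is a finite composite of maps in the v_i *)
  rc_gen : forall x y (f : hom amb x y),
      exists p : path n amb x y, pvalid vsub p /\ peval p = f;
  (* (ii) every relation is a consequence of the commutative squares *)
  rc_rel : forall x y (p q : path n amb x y),
      pvalid vsub p -> pvalid vsub q -> peval p = peval q -> sqrel vsub p q }.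

Arguments vsub {n} C i {x y} f : rename.
Arguments wsub {n} C {x y} f : rename.

Record relfun n (C D : RelCat n) := RelFun {
  fob : ob (amb C) -> ob (amb D);
  fhom : forall x y, hom (amb C) x y -> hom (amb D) (fob x) (fob y);
  fhom_id : forall x, fhom (idm x) = idm (fob x);
  fhom_cmp : forall x y z (f : hom (amb C) x y) (g : hom (amb C) y z),
      fhom (cmp g f) = cmp (fhom g) (fhom f);
  fhom_v : forall i x y (f : hom (amb C) x y),
      vsub C i f -> vsub D i (fhom f);
  fhom_w : forall x y (f : hom (amb C) x y), wsub C f -> wsub D (fhom f) }.

(* (n+1)-simplicial sets.  A multi-index (p_n,...,p_1,q) is a function *)
(* p : 'I_n.+1 -> nat; coordinate i < n stands for p_(i+1) and        *)
(* coordinate ord_max = n stands for q.                                *)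
Definition midx (n : nat) := 'I_n.+1 -> nat.

Record mor n (p' p : midx n) := Mor {
  mfun : forall k, 'I_(p' k).+1 -> 'I_(p k).+1;
  mmono : forall k (i j : 'I_(p' k).+1), (i <= j)%N -> (@mfun k i <= @mfun k j)%N }.

Arguments mfun {n p' p} a k i : rename.
Arguments mmono {n p' p} a k {i j} _ : rename.

Definition mid n (p : midx n) : mor p p :=
  @Mor n p p (fun k i => i) (fun k i j h => h).

Definition mcomp n (p p' p'' : midx n) (a : mor p' p) (b : mor p'' p') : mor p'' p :=
  @Mor n p'' p (fun k i => mfun a k (mfun b k i))
    (fun k i j h => mmono a k (mmono b k h)).

Record sSet (n : nat) := SSet {
  sx : midx n -> Type;
  sact : forall p p', mor p' p -> sx p -> sx p';
  sact_id : forall p (x : sx p), sact (mid p) x = x;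
  sact_comp : forall p p' p'' (a : mor p' p) (b : mor p'' p') (x : sx p),
      sact (mcomp a b) x = sact b (sact a x) }.

Arguments sact {n} X {p p'} a x : rename.

Record smap n (X Y : sSet n) := SMap {
  smf : forall p, sx X p -> sx Y p;
  smf_nat : forall p p' (a : mor p' p) (x : sx X p),
      smf (sact X a x) = sact Y a (smf x) }.

Arguments smf {n X Y} f {p} x : rename.

Definition is_iso n (X Y : sSet n) (f : smap X Y) : Prop :=
  exists g : smap Y X,
    (forall p (x : sx X p), smf g (smf f x) = x) /\
    (forall p (y : sx Y p), smf f (smf g y) = y).

(* The multi-relative poset p_n^{v_n} x ... x p_1^{v_1} x q^w          *)
Definition vert n (p : midx n) := forall k : 'I_n.+1, 'I_(p k).+1.

Definition vle n (p : midx n) (u v : vert p) : bool :=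
  [forall k, (u k <= v k)%N].

Definition qidx n : 'I_n.+1 := ord_max.
Definition vidx n (i : 'I_n) : 'I_n.+1 := widen_ord (leqnSn n) i.

(* u <= v is a map of v_i: only coordinates p_i and q change *)
Definition vdir n (p : midx n) (i : 'I_n) (u v : vert p) : bool :=
  [forall k, ((k != vidx i) && (k != qidx n)) ==> (u k == v k :> nat)].
(* u <= v is a map of w: only coordinate q changes *)
Definition wdir n (p : midx n) (u v : vert p) : bool :=
  [forall k, (k != qidx n) ==> (u k == v k :> nat)].

(* a (p_n,...,p_1,q)-simplex of N C: a relative functor
   p_n^{v_n} x ... x p_1^{v_1} x q^w -> C, written out *)
Record simplex n (C : RelCat n) (p : midx n) := Simplex {
  sob : vert p -> ob (amb C);
  shom : forall u v, vle u v -> hom (amb C) (sob u) (sob v);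
  shom_id : forall u (H : vle u u), shom H = idm (sob u);
  shom_cmp : forall u v t (H1 : vle u v) (H2 : vle v t) (H3 : vle u t),
      shom H3 = cmp (shom H2) (shom H1);
  shom_v : forall i u v (H : vle u v), vdir i u v -> vsub C i (shom H);
  shom_w : forall u v (H : vle u v), wdir u v -> wsub C (shom H) }.

Definition vmap n (p p' : midx n) (a : mor p' p) (u : vert p') : vert p :=
  fun k => mfun a k (u k).

Lemma vle_map n (p p' : midx n) (a : mor p' p) (u v : vert p') :
  vle u v -> vle (vmap a u) (vmap a v).
Proof. by move=> /forallP H; apply/forallP => k; apply: mmono. Qed.

Lemma vdir_map n (p p' : midx n) (a : mor p' p) i (u v : vert p') :
  vdir i u v -> vdir i (vmap a u) (vmap a v).
Proof.
move=> /forallP H; apply/forallP => k; apply/implyP => hk; rewrite /vmap.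
by move/implyP: (H k) => /(_ hk) /eqP /val_inj ->.
Qed.

Lemma wdir_map n (p p' : midx n) (a : mor p' p) (u v : vert p') :
  wdir u v -> wdir (vmap a u) (vmap a v).
Proof.
move=> /forallP H; apply/forallP => k; apply/implyP => hk; rewrite /vmap.
by move/implyP: (H k) => /(_ hk) /eqP /val_inj ->.
Qed.

Definition spull n (C : RelCat n) (p p' : midx n) (a : mor p' p)
    (s : simplex C p) : simplex C p'.
Proof.
refine (@Simplex n C p' (fun u => sob s (vmap a u))
          (fun u v H => shom s (vle_map a H)) _ _ _ _).
- by move=> u H; apply: shom_id.
- by move=> u v t H1 H2 H3; apply: shom_cmp.
- by move=> i u v H hd; apply: shom_v; apply: vdir_map.
- by move=> u v H hd; apply: shom_w; apply: wdir_map.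
Defined.

Lemma simplex_ext n (C : RelCat n) (p : midx n) (o : vert p -> ob (amb C))
  (h1 h2 : forall u v, vle u v -> hom (amb C) (o u) (o v)) a1 b1 c1 d1 a2 b2 c2 d2 :
  (forall u v H, h1 u v H = h2 u v H) ->
  @Simplex n C p o h1 a1 b1 c1 d1 = @Simplex n C p o h2 a2 b2 c2 d2.
Proof.
move=> E.
have E' : h1 = h2.
  apply: functional_extensionality_dep => u.
  apply: functional_extensionality_dep => v.
  apply: functional_extensionality_dep => H.
  exact: E.
subst h2; f_equal; apply: proof_irrelevance.
Qed.

Definition nerve n (C : RelCat n) : sSet n.
Proof.
refine (@SSet n (simplex C) (fun p p' a s => spull a s) _ _).
- move=> p [o h a b c d]; rewrite /spull /=.
  apply: simplex_ext => u v H /=.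
  by rewrite (bool_irrelevance (vle_map (mid p) H) H).
- move=> p p' p'' a b [o h a1 b1 c1 d1]; rewrite /spull /=.
  apply: simplex_ext => u v H /=.
  by congr (h _ _ _); apply: bool_irrelevance.
Defined.

Definition spush n (C D : RelCat n) (F : relfun C D) (p : midx n)
    (s : simplex C p) : simplex D p.
Proof.
refine (@Simplex n D p (fun u => fob F (sob s u))
          (fun u v H => fhom F (shom s H)) _ _ _ _).
- by move=> u H; rewrite shom_id fhom_id.
- by move=> u v t H1 H2 H3; rewrite (shom_cmp s H1 H2 H3) fhom_cmp.
- by move=> i u v H hd; apply: fhom_v; apply: shom_v.
- by move=> u v H hd; apply: fhom_w; apply: shom_w.
Defined.

Definition nerve_map n (C D : RelCat n) (F : relfun C D) :
  smap (nerve C) (nerve D).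
Proof.
refine (@SMap n (nerve C) (nerve D) (fun p s => spush F s) _).
move=> p p' a [o h a1 b1 c1 d1] /=; rewrite /spull /spush /=.
by apply: simplex_ext.
Defined.

(* (K X, eta_X : X -> N K X) is a universal arrow from X to N, i.e.
   K is the left adjoint of N and eta is the unit of K -| N. *)
Definition unit_universal n (X : sSet n) (KX : RelCat n)
    (eta : smap X (nerve KX)) : Prop :=
  forall (C : RelCat n) (f : smap X (nerve C)),
    exists g : relfun KX C,
      (forall p (x : sx X p), smf (nerve_map g) (smf eta x) = smf f x) /\
      (forall g' : relfun KX C,
          (forall p (x : sx X p), smf (nerve_map g') (smf eta x) = smf f x) ->
          g' = g).

(* Proof idea: the nerve functor [N] is full, and a universal arrow
   [eta : N C -> N K(N C)] that is the nerve of a relative functor is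
   invertible.  Fullness: a map [f : N C -> N D] gives an object map on
   0-simplices, and sends a map of [v_i] (of [w]) to the image of the
   corresponding 1-simplex along coordinate [p_i] (along [q]).  Images of
   2-chains and of commutative squares show that these assignments respect
   composition inside each [v_i] and the generating squares, so conditions
   (i) and (ii) on [C] extend them to a relative functor [C -> D].  Its nerve
   is [f] because a simplex is determined by its arrows and every arrow
   [u <= v] is a composite of edges moving one coordinate at a time.  Since
   [n >= 1], a map of [w] can also be read as a map of [v_1]. *)

From Stdlib Require Import FunctionalExtensionality ProofIrrelevance Eqdep ClassicalEpsilon.
From Pilot Require Import Defs.
From mathcomp Require Import all_boot.

Set Implicit Arguments.
Unset Strict Implicit.
Unset Printing Implicit Defensive.

(* Packing a map with its source and target lets us compare maps whose
   endpoints are only propositionally equal, such as [sob (f s) u] and the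
   image of [sob s u]. *)
Definition arr (C : Cat) := {x : ob C & {y : ob C & hom C x y}}.

Definition mkA (C : Cat) (x y : ob C) (h : hom C x y) : arr C :=
  existT _ x (existT _ y h).
Arguments mkA {C x y} h.

Definition arr_src C (a : arr C) := projT1 a.
Definition arr_tgt C (a : arr C) := projT1 (projT2 a).
Definition arr_hom C (a : arr C) : hom C (arr_src a) (arr_tgt a) := projT2 (projT2 a).

Definition arr_cast C (a : arr C) x y (ex : arr_src a = x) (ey : arr_tgt a = y) :
    hom C x y :=
  eq_rect _ (hom C x) (eq_rect _ (fun x => hom C x (arr_tgt a)) (arr_hom a) x ex) y ey.

Section Arrows.
Variable C : Cat.

Lemma mkA_cast (a : arr C) x y (ex : arr_src a = x) (ey : arr_tgt a = y) :
  mkA (arr_cast ex ey) = a.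
Proof. by case: a ex ey => x0 [y0 h] /= ex ey; subst. Qed.

Lemma mkA_inj (x y : ob C) (h h' : hom C x y) : mkA h = mkA h' -> h = h'.
Proof. by move=> E; do 2 apply inj_pair2 in E. Qed.

Lemma mkA_eq_ob (x y x' y' : ob C) (h : hom C x y) (h' : hom C x' y') :
  mkA h = mkA h' -> x = x' /\ y = y'.
Proof. by move=> E; split; [apply: (f_equal (@arr_src C) E) | apply: (f_equal (@arr_tgt C) E)]. Qed.

Lemma mkA_cmp (x y z x' y' z' : ob C) (h1 : hom C x y) (h2 : hom C y z)
    (h1' : hom C x' y') (h2' : hom C y' z') :
  mkA h1 = mkA h1' -> mkA h2 = mkA h2' -> mkA (cmp h2 h1) = mkA (cmp h2' h1').
Proof.
move=> E1 E2; case: (mkA_eq_ob E1) => ex ey; subst x' y'.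
case: (mkA_eq_ob E2) => _ ez; subst z'.
by rewrite (mkA_inj E1) (mkA_inj E2).
Qed.

Definition composite (a b c : arr C) : Prop :=
  exists x y z (h1 : hom C x y) (h2 : hom C y z),
    [/\ a = mkA h1, b = mkA h2 & c = mkA (cmp h2 h1)].

Lemma composite_mkA (x y z : ob C) (h1 : hom C x y) (h2 : hom C y z) :
  composite (mkA h1) (mkA h2) (mkA (cmp h2 h1)).
Proof. by exists x, y, z, h1, h2. Qed.

Lemma composite_idl (x y : ob C) (h : hom C x y) :
  composite (mkA (idm x)) (mkA h) (mkA h).
Proof. by have := composite_mkA (idm x) h; rewrite cmp_id_r. Qed.

Lemma composite_idr (x y : ob C) (h : hom C x y) :
  composite (mkA h) (mkA (idm y)) (mkA h).
Proof. by have := composite_mkA h (idm y); rewrite cmp_id_l. Qed.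

Lemma composite_uniq (a b c c' : arr C) : composite a b c -> composite a b c' -> c = c'.
Proof.
move=> [x [y [z [h1 [h2 [-> -> ->]]]]]] [x' [y' [z' [h1' [h2' [E1 E2 ->]]]]]].
exact: mkA_cmp.
Qed.

Lemma compositeE (x y z : ob C) (h1 : hom C x y) (h2 : hom C y z) (h3 : hom C x z) :
  composite (mkA h1) (mkA h2) (mkA h3) -> h3 = cmp h2 h1.
Proof. by move=> c; apply: mkA_inj; apply: composite_uniq c (composite_mkA _ _). Qed.

End Arrows.

(** * Simplices of the nerve through their arrows *)

Section SimplexArrows.
Variables (n : nat) (C : RelCat n).
Notation A := (amb C).

Lemma vle_refl (p : midx n) (u : vert p) : vle u u.
Proof. exact/forallP. Qed.

Lemma vle_at (p : midx n) (u v : vert p) j : vle u v -> (u j <= v j)%N.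
Proof. by move/forallP. Qed.

Definition sarr (p : midx n) (s : simplex C p) (u v : vert p) (H : vle u v) : arr A :=
  mkA (shom s H).

Lemma sarr_eq (p : midx n) (s : simplex C p) u v u' v' (H : vle u v) (H' : vle u' v') :
  u = u' -> v = v' -> sarr s H = sarr s H'.
Proof. by move=> eu ev; subst; rewrite (bool_irrelevance H H'). Qed.

Lemma sarr_id (p : midx n) (s : simplex C p) u (H : vle u u) :
  sarr s H = mkA (idm (sob s u)).
Proof. by rewrite /sarr shom_id. Qed.

Lemma sarr_cmp (p : midx n) (s : simplex C p) u v t
    (H1 : vle u v) (H2 : vle v t) (H3 : vle u t) :
  composite (sarr s H1) (sarr s H2) (sarr s H3).
Proof. rewrite /sarr (shom_cmp s H1 H2 H3); exact: composite_mkA. Qed.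

Lemma simplex_eq_sarr (p : midx n) (s t : simplex C p) :
  (forall u v (H : vle u v), sarr s H = sarr t H) -> s = t.
Proof.
case: s => o1 h1 a1 b1 c1 d1; case: t => o2 h2 a2 b2 c2 d2 /= E.
have eo : o1 = o2.
  by apply: functional_extensionality_dep => u; case: (mkA_eq_ob (E u u (vle_refl u))).
subst o2; apply: simplex_ext => u v H; exact: mkA_inj (E u v H).
Qed.

Lemma sarr_spull (p p' : midx n) (a : mor p' p) (s : simplex C p) u v (H : vle u v) :
  sarr (spull a s) H = sarr s (vle_map a H).
Proof. by []. Qed.

Section FromArrows.
Variables (p : midx n) (o : vert p -> ob A) (hm : vert p -> vert p -> arr A).
Hypothesis hm_src : forall u v, vle u v -> arr_src (hm u v) = o u.
Hypothesis hm_tgt : forall u v, vle u v -> arr_tgt (hm u v) = o v.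
Hypothesis hm_id : forall u, hm u u = mkA (idm (o u)).
Hypothesis hm_cmp :
  forall u v t, vle u v -> vle v t -> composite (hm u v) (hm v t) (hm u t).
Hypothesis hm_v : forall i u v, vle u v -> vdir i u v -> vsub C i (arr_hom (hm u v)).
Hypothesis hm_w : forall u v, vle u v -> wdir u v -> wsub C (arr_hom (hm u v)).

Let bhom u v (H : vle u v) : hom A (o u) (o v) := arr_cast (hm_src H) (hm_tgt H).

Let bhomA u v (H : vle u v) : mkA (bhom H) = hm u v.
Proof. exact: mkA_cast. Qed.

Definition simplex_of_arrows : simplex C p.
Proof.
refine (@Simplex n C p o bhom _ _ _ _).
- by move=> u H; apply: mkA_inj; rewrite bhomA hm_id.
- move=> u v t H1 H2 H3; apply: compositeE.
  by rewrite !bhomA; apply: hm_cmp.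
- by move=> i u v H hd; have := hm_v H hd; rewrite -(bhomA H).
- by move=> u v H hd; have := hm_w H hd; rewrite -(bhomA H).
Defined.

Lemma sarr_simplex_of_arrows u v (H : vle u v) : sarr simplex_of_arrows H = hm u v.
Proof. exact: bhomA. Qed.

End FromArrows.

(* A map of [v_i] in a simplex may only move the coordinates [p_i] and [q]. *)
Definition vcoord (i : 'I_n) (j : 'I_n.+1) : bool := (j == vidx i) || (j == qidx n).

(* The maps allowed on an edge of a simplex that moves only coordinate [k]. *)
Definition csub (k : 'I_n.+1) (x y : ob A) (h : hom A x y) : Prop :=
  (forall i, vcoord i k -> vsub C i h) /\ (k == qidx n -> wsub C h).

Lemma csub_id k x : csub k (idm x).
Proof. by split=> [i _|_]; [apply: vsub_id | apply: wsub_id]. Qed.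

Lemma vidx_neq_qidx (i : 'I_n) : vidx i != qidx n.
Proof. by rewrite -(inj_eq val_inj) /= neq_ltn ltn_ord. Qed.

Lemma vidx_inj : injective (@vidx n).
Proof. by move=> i j /(f_equal val) /= e; apply: val_inj. Qed.

Lemma vcoord_vidx (i i' : 'I_n) : vcoord i' (vidx i) = (i' == i).
Proof.
rewrite /vcoord (negbTE (vidx_neq_qidx i)) orbF eq_sym.
by apply/eqP/eqP => [/vidx_inj | ->].
Qed.

Lemma csub_vidx (i : 'I_n) x y (h : hom A x y) : csub (vidx i) h <-> vsub C i h.
Proof.
split=> [[hv _] | hv]; first by apply: hv; rewrite vcoord_vidx.
split=> [i' | ]; first by rewrite vcoord_vidx => /eqP ->.
by rewrite (negbTE (vidx_neq_qidx i)).
Qed.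

Lemma csub_qidx x y (h : hom A x y) : csub (qidx n) h <-> wsub C h.
Proof.
split=> [[_ hw] | hw]; first exact: hw.
by split=> [i _ |_ //]; apply: wsub_vsub.
Qed.

Lemma vdir_moved (p : midx n) i (u v : vert p) j :
  vdir i u v -> (u j : nat) != v j -> vcoord i j.
Proof.
move=> /forallP /(_ j) H ne; apply/negPn/negP => /norP [h1 h2].
by move: H; rewrite h1 h2 /= (negbTE ne).
Qed.

Lemma wdir_moved (p : midx n) (u v : vert p) j :
  wdir u v -> (u j : nat) != v j -> j == qidx n.
Proof.
move=> /forallP /(_ j) H ne; apply/negPn/negP => h1.
by move: H; rewrite h1 /= (negbTE ne).
Qed.

Lemma shom_csub (p : midx n) (s : simplex C p) k (w0 w1 : vert p) (H : vle w0 w1) :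
  (forall j, j != k -> w0 j = w1 j) -> csub k (shom s H).
Proof.
move=> Hk; split=> [i ik | /eqP kq].
- apply: shom_v; apply/forallP => j; apply/implyP => /andP [h1 h2].
  have ne : j != k.
    by apply: contraNneq h1 => ejk; move: ik; rewrite /vcoord -ejk (negbTE h2) orbF.
  by rewrite Hk.
- apply: shom_w; apply/forallP => j; apply/implyP => h1.
  by rewrite Hk // kq.
Qed.

End SimplexArrows.

(** * Points, chains and squares as simplices *)

Section BasicSimplices.
Variables (n : nat) (C : RelCat n).
Notation A := (amb C).

Section Point.
Variables (p : midx n) (c : ob A).

Definition point_simplex : simplex C p.
Proof.
refine (@simplex_of_arrows n C p (fun _ => c) (fun _ _ => mkA (idm c)) _ _ _ _ _ _) => //.
- by move=> u v t _ _; apply: composite_idl.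
- by move=> i u v _ _; apply: vsub_id.
- by move=> u v _ _; apply: wsub_id.
Defined.

Lemma sarr_point u v (H : vle u v) : sarr point_simplex H = mkA (idm c).
Proof. exact: sarr_simplex_of_arrows. Qed.

End Point.

(* The simplex [a --x--> b --y--> c] laid out along coordinate [k]
   (positions beyond 2 are sent to [c]). *)
Section Chain.
Variables (p : midx n) (k : 'I_n.+1) (a b c : ob A) (x : hom A a b) (y : hom A b c).
Hypotheses (hx : csub k x) (hy : csub k y).

Definition chain_ob (t : nat) := match t with 0 => a | 1 => b | _ => c end.

Definition chain_arr (s t : nat) : arr A :=
  match s, t with
  | 0, 0 => mkA (idm a)
  | 0, 1 => mkA x
  | 0, _ => mkA (cmp y x)
  | 1, 0 => mkA (idm a)
  | 1, 1 => mkA (idm b)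
  | 1, _ => mkA y
  | _, 0 | _, 1 => mkA (idm a)
  | _, _ => mkA (idm c)
  end.

Lemma chain_arr_v i s t : (s <= t)%N -> (s != t -> vcoord i k) ->
  vsub C i (arr_hom (chain_arr s t)).
Proof.
case: s => [|[|s]]; case: t => [|[|t]] //= _ ok; rewrite /arr_hom /=;
  try exact: vsub_id; try exact: hx.1 (ok isT); try exact: hy.1 (ok isT).
by apply: vsub_cmp; [apply: hx.1 | apply: hy.1]; apply: ok.
Qed.

Lemma chain_arr_w s t : (s <= t)%N -> (s != t -> k == qidx n) ->
  wsub C (arr_hom (chain_arr s t)).
Proof.
case: s => [|[|s]]; case: t => [|[|t]] //= _ ok; rewrite /arr_hom /=;
  try exact: wsub_id; try exact: hx.2 (ok isT); try exact: hy.2 (ok isT).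
by apply: wsub_cmp; [apply: hx.2 | apply: hy.2]; apply: ok.
Qed.

Definition chain_simplex : simplex C p.
Proof.
refine (@simplex_of_arrows n C p (fun u => chain_ob (u k))
          (fun u v => chain_arr (u k) (v k)) _ _ _ _ _ _).
- by move=> u v /(vle_at k); case: (u k : nat) => [|[|?]]; case: (v k : nat) => [|[|?]].
- by move=> u v /(vle_at k); case: (u k : nat) => [|[|?]]; case: (v k : nat) => [|[|?]].
- by move=> u; case: (u k : nat) => [|[|?]].
- move=> u v t /(vle_at k) + /(vle_at k).
  case: (u k : nat) => [|[|?]]; case: (v k : nat) => [|[|?]]; case: (t k : nat) => [|[|?]] //= _ _;
    first [exact: composite_mkA | exact: composite_idl | exact: composite_idr].
- move=> i u v H hd; apply: chain_arr_v; first exact: vle_at.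
  exact: vdir_moved hd.
- move=> u v H hd; apply: chain_arr_w; first exact: vle_at.
  exact: wdir_moved hd.
Defined.

Lemma sarr_chain u v (H : vle u v) : sarr chain_simplex H = chain_arr (u k) (v k).
Proof. exact: sarr_simplex_of_arrows. Qed.

End Chain.

(* The commutative square [y2 x1 = x2 y1] laid out with the [x]'s along
   coordinate [k] and the [y]'s along coordinate [l]; only whether a
   coordinate is positive matters. *)
Section Square.
Variables (p : midx n) (k l : 'I_n.+1).
Hypothesis kl : k != l.
Variables (a b c d : ob A) (x1 : hom A a b) (y2 : hom A b d).
Variables (y1 : hom A a c) (x2 : hom A c d).
Hypothesis sq : cmp y2 x1 = cmp x2 y1.
Hypotheses (hx1 : csub k x1) (hx2 : csub k x2) (hy1 : csub l y1) (hy2 : csub l y2).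

Definition square_ob (b1 b2 : bool) :=
  if b1 then (if b2 then d else b) else (if b2 then c else a).

Definition square_arr (b1 b2 c1 c2 : bool) : arr A :=
  match b1, b2, c1, c2 with
  | false, false, false, false => mkA (idm a)
  | false, false, true, false => mkA x1
  | false, false, false, true => mkA y1
  | false, false, true, true => mkA (cmp y2 x1)
  | true, false, true, false => mkA (idm b)
  | true, false, true, true => mkA y2
  | false, true, false, true => mkA (idm c)
  | false, true, true, true => mkA x2
  | true, true, true, true => mkA (idm d)
  | _, _, _, _ => mkA (idm a)
  end.

Lemma square_arr_v i (b1 b2 c1 c2 : bool) : (b1 <= c1)%N -> (b2 <= c2)%N ->
  (b1 != c1 -> vcoord i k) -> (b2 != c2 -> vcoord i l) ->
  vsub C i (arr_hom (square_arr b1 b2 c1 c2)).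
Proof.
case: b1; case: b2; case: c1; case: c2 => //= _ _ o1 o2; rewrite /arr_hom /=;
  try exact: vsub_id; try exact: hx1.1 (o1 isT); try exact: hx2.1 (o1 isT);
  try exact: hy1.1 (o2 isT); try exact: hy2.1 (o2 isT).
by apply: vsub_cmp; [apply: hx1.1 (o1 isT) | apply: hy2.1 (o2 isT)].
Qed.

Lemma square_arr_w (b1 b2 c1 c2 : bool) : (b1 <= c1)%N -> (b2 <= c2)%N ->
  (b1 != c1 -> k == qidx n) -> (b2 != c2 -> l == qidx n) ->
  wsub C (arr_hom (square_arr b1 b2 c1 c2)).
Proof.
case: b1; case: b2; case: c1; case: c2 => //= _ _ o1 o2; rewrite /arr_hom /=;
  try exact: wsub_id; try exact: hx1.2 (o1 isT); try exact: hx2.2 (o1 isT);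
  try exact: hy1.2 (o2 isT); try exact: hy2.2 (o2 isT).
by move: kl; rewrite (eqP (o1 isT)) (eqP (o2 isT)) eqxx.
Qed.

Definition bit (u : vert p) j : bool := (0 < u j)%N.

Lemma bit_le u v j : vle u v -> (bit u j <= bit v j)%N.
Proof.
move=> /(vle_at j); rewrite /bit.
by case: (posnP (v j)) => [->|]; [rewrite leqn0 => /eqP -> | case: (0 < u j)%N].
Qed.

Lemma bit_moved u v j : bit u j != bit v j -> (u j : nat) != v j.
Proof. by apply: contra => /eqP; rewrite /bit => ->. Qed.

Definition square_simplex : simplex C p.
Proof.
refine (@simplex_of_arrows n C p (fun u => square_ob (bit u k) (bit u l))
   (fun u v => square_arr (bit u k) (bit u l) (bit v k) (bit v l)) _ _ _ _ _ _).
- by move=> u v H; move: (bit_le k H) (bit_le l H);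
    case: (bit u k); case: (bit u l); case: (bit v k); case: (bit v l).
- by move=> u v H; move: (bit_le k H) (bit_le l H);
    case: (bit u k); case: (bit u l); case: (bit v k); case: (bit v l).
- by move=> u; case: (bit u k); case: (bit u l).
- move=> u v t H1 H2.
  move: (bit_le k H1) (bit_le l H1) (bit_le k H2) (bit_le l H2).
  case: (bit u k); case: (bit u l); case: (bit v k); case: (bit v l);
    case: (bit t k); case: (bit t l) => //= _ _ _ _;
    first [exact: composite_mkA | exact: composite_idl | exact: composite_idr
          | (rewrite sq; exact: composite_mkA)].
- move=> i u v H hd; apply: square_arr_v; try exact: bit_le;
    by move=> /bit_moved; apply: vdir_moved hd.
- move=> u v H hd; apply: square_arr_w; try exact: bit_le;
    by move=> /bit_moved; apply: wdir_moved hd.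
Defined.

Lemma sarr_square u v (H : vle u v) :
  sarr square_simplex H = square_arr (bit u k) (bit u l) (bit v k) (bit v l).
Proof. exact: sarr_simplex_of_arrows. Qed.

End Square.

End BasicSimplices.

Section Shapes.
Variable n : nat.

Definition point_idx : midx n := fun _ => 0.
Definition edge_idx (k : 'I_n.+1) : midx n := fun j => if j == k then 1 else 0.
Definition chain_idx (k : 'I_n.+1) : midx n := fun j => if j == k then 2 else 0.
Definition square_idx (k l : 'I_n.+1) : midx n :=
  fun j => if (j == k) || (j == l) then 1 else 0.

Definition point_vert : vert point_idx := fun _ => ord0.

Definition mkv (p : midx n) (t : 'I_n.+1 -> nat) : vert p := fun j => inord (t j).

Lemma mkvE (p : midx n) (t : 'I_n.+1 -> nat) j : (t j <= p j)%N -> (mkv p t j : nat) = t j.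
Proof. exact: inordK. Qed.

Lemma mkv_le (p : midx n) (t0 t1 : 'I_n.+1 -> nat) :
  (forall j, t0 j <= t1 j)%N -> (forall j, t1 j <= p j)%N -> vle (mkv p t0) (mkv p t1).
Proof. by move=> h1 h2; apply/forallP => j; rewrite !mkvE // (leq_trans (h1 j)). Qed.

Definition axis_vert (p : midx n) (k : 'I_n.+1) (t : nat) : vert p :=
  mkv p (fun j => if j == k then t else 0).

Lemma axis_vert_le (p : midx n) k t t' :
  (t <= t')%N -> (t' <= p k)%N -> vle (axis_vert p k t) (axis_vert p k t').
Proof. by move=> h h'; apply: mkv_le => j; case: eqP => // ->. Qed.

Lemma axis_vertE (p : midx n) k t : (t <= p k)%N -> (axis_vert p k t k : nat) = t.
Proof. by move=> h; rewrite mkvE eqxx. Qed.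

Lemma axis_vert_off (p : midx n) k t t' j : j != k -> axis_vert p k t j = axis_vert p k t' j.
Proof. by move=> ne; rewrite /axis_vert /mkv (negbTE ne). Qed.

Definition plane_vert (p : midx n) (k l : 'I_n.+1) (t1 t2 : nat) : vert p :=
  mkv p (fun j => if j == k then t1 else if j == l then t2 else 0).

Lemma plane_vert_le k l (t1 t2 t1' t2' : bool) : (t1 <= t1')%N -> (t2 <= t2')%N ->
  vle (plane_vert (square_idx k l) k l t1 t2) (plane_vert (square_idx k l) k l t1' t2').
Proof.
move=> h1 h2; apply: mkv_le => j; rewrite /square_idx;
  by case: (j == k); case: (j == l); case: t1' h1; case: t2' h2; case: t1; case: t2.
Qed.

Lemma plane_vert_bitk k l (t1 t2 : bool) :
  bit (plane_vert (square_idx k l) k l t1 t2) k = t1.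
Proof. by rewrite /bit mkvE /square_idx eqxx //=; case: t1. Qed.

Lemma plane_vert_bitl k l (t1 t2 : bool) : k != l ->
  bit (plane_vert (square_idx k l) k l t1 t2) l = t2.
Proof.
move=> kl; rewrite /bit mkvE /square_idx (eq_sym l) (negbTE kl) eqxx ?orbT /=;
  by case: t2.
Qed.

Lemma plane_vert_offk (p : midx n) k l t1 t1' t2 j :
  j != k -> plane_vert p k l t1 t2 j = plane_vert p k l t1' t2 j.
Proof. by move=> ne; rewrite /plane_vert /mkv (negbTE ne). Qed.

Lemma plane_vert_offl (p : midx n) k l t1 t2 t2' j :
  j != l -> plane_vert p k l t1 t2 j = plane_vert p k l t1 t2' j.
Proof. by move=> ne; rewrite /plane_vert /mkv (negbTE ne); case: (j == k). Qed.

Definition const_mor (p' p : midx n) (w : vert p) : mor p' p :=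
  @Mor n p' p (fun j _ => w j) (fun j i i' _ => leqnn _).

Lemma edge_mor_mono (p p' : midx n) k (w0 w1 : vert p) (H : vle w0 w1) j
    (i i' : 'I_(p' j).+1) : (i <= i')%N ->
  ((if (0 < i)%N && (j == k) then w1 j else w0 j)
     <= (if (0 < i')%N && (j == k) then w1 j else w0 j))%N.
Proof.
move=> le; case: (j == k); rewrite ?andbT ?andbF //.
case: (posnP i') => [e'|_]; first by move: le; rewrite e' leqn0 => /eqP ->.
by case: (0 < i)%N => //; apply: vle_at.
Qed.

Definition edge_mor (p' p : midx n) k (w0 w1 : vert p) (H : vle w0 w1) : mor p' p :=
  @Mor n p' p (fun j t => if (0 < t)%N && (j == k) then w1 j else w0 j)
    (fun j i i' le => @edge_mor_mono p p' k w0 w1 H j i i' le).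

Lemma vmap_edge_mor (p' p : midx n) k (w0 w1 : vert p) (H : vle w0 w1)
    (Hk : forall j, j != k -> w0 j = w1 j) (u : vert p') :
  vmap (edge_mor p' k H) u = if (0 < u k)%N then w1 else w0.
Proof.
apply: functional_extensionality_dep => j; rewrite /vmap /=.
case: (eqVneq j k) => [->|ne]; first by rewrite andbT; case: (0 < u k)%N.
by rewrite andbF; case: (0 < u k)%N => //; apply: Hk.
Qed.

Lemma edge_idx_le k (u : vert (edge_idx k)) : (u k <= 1)%N.
Proof. by move: (ltn_ord (u k)); move: (nat_of_ord (u k)) => t; rewrite /edge_idx eqxx. Qed.

Definition edge_src k : vert (edge_idx k) := axis_vert (edge_idx k) k 0.
Definition edge_tgt k : vert (edge_idx k) := axis_vert (edge_idx k) k 1.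

Lemma edge_src_tgt k : vle (edge_src k) (edge_tgt k).
Proof. by apply: axis_vert_le; rewrite /edge_idx ?eqxx. Qed.

Lemma edge_srcE k : (edge_src k k : nat) = 0.
Proof. exact: axis_vertE. Qed.

Lemma edge_tgtE k : (edge_tgt k k : nat) = 1.
Proof. by rewrite axis_vertE /edge_idx ?eqxx. Qed.

Variable C : RelCat n.
Notation A := (amb C).

Definition edge_simplex k x y (h : hom A x y) (hk : csub k h) : simplex C (edge_idx k) :=
  chain_simplex (edge_idx k) hk (csub_id k y).

Lemma sarr_edge k x y (h : hom A x y) (hk : csub k h) u v (H : vle u v) :
  sarr (edge_simplex hk) H =
    if (0 < u k)%N then mkA (idm y) else if (0 < v k)%N then mkA h else mkA (idm x).
Proof.
rewrite sarr_chain; move: (edge_idx_le u) (edge_idx_le v) (vle_at k H).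
by case: (u k : nat) => [|[|?]]; case: (v k : nat) => [|[|?]].
Qed.

Lemma sob_edge_src k x y (h : hom A x y) (hk : csub k h) :
  sob (edge_simplex hk) (edge_src k) = x.
Proof. by rewrite /= edge_srcE. Qed.

Lemma sob_edge_tgt k x y (h : hom A x y) (hk : csub k h) :
  sob (edge_simplex hk) (edge_tgt k) = y.
Proof. by rewrite /= edge_tgtE. Qed.

Lemma spull_edge_mor (p : midx n) (s : simplex C p) k (w0 w1 : vert p) (H : vle w0 w1)
    (Hk : forall j, j != k -> w0 j = w1 j) :
  spull (edge_mor (edge_idx k) k H) s = edge_simplex (shom_csub s H Hk).
Proof.
apply: simplex_eq_sarr => u v H'; rewrite sarr_spull sarr_edge.
have H2 : vle (if (0 < u k)%N then w1 else w0) (if (0 < v k)%N then w1 else w0).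
  by rewrite -!(vmap_edge_mor _ Hk); apply: vle_map.
rewrite (sarr_eq s (vle_map _ H') H2 (vmap_edge_mor _ Hk u) (vmap_edge_mor _ Hk v)).
move: H2; have := bit_le k H'; rewrite /bit.
case: (0 < u k)%N; case: (0 < v k)%N => // _ H2; try by rewrite sarr_id.
by rewrite /sarr (bool_irrelevance H2 H).
Qed.

Lemma spull_const_mor (p : midx n) (s : simplex C p) (w : vert p) :
  spull (const_mor point_idx w) s = point_simplex point_idx (sob s w).
Proof.
apply: simplex_eq_sarr => u v H; rewrite sarr_spull sarr_point.
by rewrite (sarr_eq s _ (vle_refl w) (erefl w) (erefl w)) sarr_id.
Qed.

Lemma spull_const_edge k (x : ob A) :
  spull (const_mor (edge_idx k) point_vert) (point_simplex point_idx x) =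
    edge_simplex (csub_id k x).
Proof.
apply: simplex_eq_sarr => u v H; rewrite sarr_spull sarr_point sarr_edge.
by case: (0 < u k)%N; case: (0 < v k)%N.
Qed.

End Shapes.

(** * Maps of nerves on edges, chains and squares *)

Section NerveMapEdges.
Variables (n : nat) (C D : RelCat n) (f : smap (nerve C) (nerve D)).
Notation AC := (amb C).
Notation AD := (amb D).

Lemma smf_spull (p p' : midx n) (a : mor p' p) (s : simplex C p) :
  smf f (spull a s) = spull a (smf f s).
Proof. exact: (smf_nat f a s). Qed.

Definition lift_ob (x : ob AC) : ob AD :=
  sob (smf f (point_simplex (@point_idx n) x)) (@point_vert n).

Lemma sob_smf (p : midx n) (s : simplex C p) w : sob (smf f s) w = lift_ob (sob s w).
Proof. by rewrite /lift_ob -spull_const_mor smf_spull. Qed.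

Definition edge_arr k x y (h : hom AC x y) (hk : csub k h) : arr AD :=
  sarr (smf f (edge_simplex hk)) (edge_src_tgt k).

Lemma edge_arr_src k x y (h : hom AC x y) (hk : csub k h) :
  arr_src (edge_arr hk) = lift_ob x.
Proof. by rewrite /= (sob_smf (edge_simplex hk)) sob_edge_src. Qed.

Lemma edge_arr_tgt k x y (h : hom AC x y) (hk : csub k h) :
  arr_tgt (edge_arr hk) = lift_ob y.
Proof. by rewrite /arr_tgt /= (sob_smf (edge_simplex hk)) sob_edge_tgt. Qed.

Definition edge_hom k x y (h : hom AC x y) (hk : csub k h) : hom AD (lift_ob x) (lift_ob y) :=
  arr_cast (edge_arr_src hk) (edge_arr_tgt hk).

Lemma mkA_edge_hom k x y (h : hom AC x y) (hk : csub k h) : mkA (edge_hom hk) = edge_arr hk.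
Proof. exact: mkA_cast. Qed.

Lemma edge_arr_eq k x y x' y' (h : hom AC x y) (h' : hom AC x' y')
    (hk : csub k h) (hk' : csub k h') :
  mkA h = mkA h' -> edge_arr hk = edge_arr hk'.
Proof.
move=> E; case: (mkA_eq_ob E) => ex ey; subst x' y'; move: hk'.
by rewrite -(mkA_inj E) => hk'; rewrite (proof_irrelevance _ hk hk').
Qed.

Lemma sarr_smf_edge (p : midx n) (s : simplex C p) k (w0 w1 : vert p) (H : vle w0 w1)
    (Hk : forall j, j != k -> w0 j = w1 j) x y (h : hom AC x y) (hk : csub k h) :
  sarr s H = mkA h -> sarr (smf f s) H = mkA (edge_hom hk).
Proof.
move=> E; rewrite mkA_edge_hom -(edge_arr_eq (shom_csub s H Hk) hk E).
rewrite /edge_arr -(spull_edge_mor s H Hk) smf_spull sarr_spull.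
by apply: sarr_eq; rewrite (vmap_edge_mor _ Hk) ?edge_srcE ?edge_tgtE.
Qed.

Lemma edge_hom_id k x (hk : csub k (idm x)) : edge_hom hk = idm (lift_ob x).
Proof.
apply: mkA_inj; rewrite mkA_edge_hom (proof_irrelevance _ hk (csub_id k x)).
by rewrite /edge_arr -spull_const_edge smf_spull sarr_spull sarr_id.
Qed.

Lemma edge_hom_cmp k (a b c : ob AC) (x : hom AC a b) (y : hom AC b c)
    (hx : csub k x) (hy : csub k y) (hyx : csub k (cmp y x)) :
  edge_hom hyx = cmp (edge_hom hy) (edge_hom hx).
Proof.
pose Q := chain_simplex (chain_idx k) hx hy.
pose V t := axis_vert (chain_idx k) k t.
have len : chain_idx k k = 2 by rewrite /chain_idx eqxx.
have Vk t : (t <= 2)%N -> (V t k : nat) = t by move=> h; rewrite axis_vertE ?len.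
have HV t t' : (t <= t')%N -> (t' <= 2)%N -> vle (V t) (V t').
  by move=> h h'; apply: axis_vert_le; rewrite ?len.
have H01 := HV 0 1 isT isT; have H12 := HV 1 2 isT isT; have H02 := HV 0 2 isT isT.
have E01 : sarr (smf f Q) H01 = mkA (edge_hom hx).
  by apply: (sarr_smf_edge (@axis_vert_off _ _ k 0 1)); rewrite sarr_chain !Vk.
have E12 : sarr (smf f Q) H12 = mkA (edge_hom hy).
  by apply: (sarr_smf_edge (@axis_vert_off _ _ k 1 2)); rewrite sarr_chain !Vk.
have E02 : sarr (smf f Q) H02 = mkA (edge_hom hyx).
  by apply: (sarr_smf_edge (@axis_vert_off _ _ k 0 2)); rewrite sarr_chain !Vk.
by apply: compositeE; rewrite -E01 -E12 -E02; apply: sarr_cmp.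
Qed.

Lemma edge_hom_square k l (kl : k != l) (a b c d : ob AC) (x1 : hom AC a b)
    (y2 : hom AC b d) (y1 : hom AC a c) (x2 : hom AC c d) (sq : cmp y2 x1 = cmp x2 y1)
    (hx1 : csub k x1) (hx2 : csub k x2) (hy1 : csub l y1) (hy2 : csub l y2) :
  cmp (edge_hom hy2) (edge_hom hx1) = cmp (edge_hom hx2) (edge_hom hy1).
Proof.
pose Q := square_simplex (square_idx k l) kl sq hx1 hx2 hy1 hy2.
pose V (t1 t2 : bool) := plane_vert (square_idx k l) k l t1 t2.
have H00_10 : vle (V false false) (V true false) by apply: plane_vert_le.
have H10_11 : vle (V true false) (V true true) by apply: plane_vert_le.
have H00_01 : vle (V false false) (V false true) by apply: plane_vert_le.
have H01_11 : vle (V false true) (V true true) by apply: plane_vert_le.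
have H00_11 : vle (V false false) (V true true) by apply: plane_vert_le.
have sarrQ t1 t2 t1' t2' (H : vle (V t1 t2) (V t1' t2')) :
    sarr Q H = square_arr x1 y2 y1 x2 t1 t2 t1' t2'.
  by rewrite sarr_square !plane_vert_bitk !plane_vert_bitl.
have ek t1 t1' t2 := @plane_vert_offk n (square_idx k l) k l t1 t1' t2.
have el t1 t2 t2' := @plane_vert_offl n (square_idx k l) k l t1 t2 t2'.
have E00_10 : sarr (smf f Q) H00_10 = mkA (edge_hom hx1).
  by apply: (sarr_smf_edge (ek _ _ _)); rewrite sarrQ.
have E10_11 : sarr (smf f Q) H10_11 = mkA (edge_hom hy2).
  by apply: (sarr_smf_edge (el _ _ _)); rewrite sarrQ.
have E00_01 : sarr (smf f Q) H00_01 = mkA (edge_hom hy1).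
  by apply: (sarr_smf_edge (el _ _ _)); rewrite sarrQ.
have E01_11 : sarr (smf f Q) H01_11 = mkA (edge_hom hx2).
  by apply: (sarr_smf_edge (ek _ _ _)); rewrite sarrQ.
have D1 := sarr_cmp (smf f Q) H00_10 H10_11 H00_11.
have D2 := sarr_cmp (smf f Q) H00_01 H01_11 H00_11.
rewrite E00_10 E10_11 in D1; rewrite E00_01 E01_11 in D2.
apply: mkA_inj.
by rewrite (composite_uniq (composite_mkA _ _) D1) (composite_uniq (composite_mkA _ _) D2).
Qed.

(* Image of the square [idm . h = idm . h] spanned by coordinates [p_i] and [q]. *)
Lemma edge_hom_qidx (i : 'I_n) x y (h : hom AC x y) (hq : csub (qidx n) h)
    (hv : csub (vidx i) h) :
  edge_hom hq = edge_hom hv.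
Proof.
have := @edge_hom_square (vidx i) (qidx n) (vidx_neq_qidx i) x y y y h (idm y) h (idm y)
  erefl hv (csub_id _ y) hq (csub_id _ y).
by rewrite !edge_hom_id !cmp_id_l.
Qed.

End NerveMapEdges.

(** * The relative functor underlying a map of nerves *)

Section PathImage.
Variables (n : nat) (C : RelCat n).
Notation A := (amb C).

Lemma pvalid_pcat x y z (r : Defs.path n A y z) (s : Defs.path n A x y) :
  pvalid (vsub C) (pcat r s) <-> pvalid (vsub C) r /\ pvalid (vsub C) s.
Proof. by elim: r s => [y0|x0 y0 z0 i h q IH] s /=; [|rewrite IH]; tauto. Qed.

Lemma peval_pcat x y z (r : Defs.path n A y z) (s : Defs.path n A x y) :
  peval (pcat r s) = cmp (peval r) (peval s).
Proof.
elim: r s => [y0|x0 y0 z0 i h q IH] s /=; first by rewrite cmp_id_l.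
by rewrite IH cmp_assoc.
Qed.

Lemma sqrel_pvalid x y (P Q : Defs.path n A x y) :
  sqrel (vsub C) P Q -> (pvalid (vsub C) P <-> pvalid (vsub C) Q).
Proof.
elim=> {x y P Q}.
- by [].
- by move=> x y p q _ IH; tauto.
- by move=> x y p q r _ IH1 _ IH2; tauto.
- by move=> x i /=; split=> // _; split=> //; apply: vsub_id.
- by move=> a b c d i j x1 y2 y1 x2 h1 h2 h3 h4 _ /=; tauto.
- by move=> x y z t r p q s _ IH; rewrite !pvalid_pcat IH.
Qed.

End PathImage.

Section Unnerve.
Variable n : nat.
Hypothesis hn : (0 < n)%N.
Variables (C D : RelCat n) (f : smap (nerve C) (nerve D)).
Notation AC := (amb C).
Notation AD := (amb D).
Notation lift_ob := (lift_ob f).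

Definition vedge_hom (i : 'I_n) x y (h : hom AC x y) (hv : vsub C i h) :
    hom AD (lift_ob x) (lift_ob y) :=
  edge_hom f (proj2 (csub_vidx i h) hv).

Fixpoint path_image x y (P : Defs.path n AC x y) :
    pvalid (vsub C) P -> hom AD (lift_ob x) (lift_ob y) :=
  match P in Defs.path _ _ x0 y0
        return pvalid (vsub C) P -> hom AD (lift_ob x0) (lift_ob y0) with
  | pnil x0 => fun _ => idm (lift_ob x0)
  | pcons _ _ _ i h q => fun H => cmp (vedge_hom (proj1 H)) (path_image (proj2 H))
  end.

Lemma path_image_pcat x y z (r : Defs.path n AC y z) (s : Defs.path n AC x y) H Hr Hs :
  path_image (P := pcat r s) H = cmp (path_image (P := r) Hr) (path_image (P := s) Hs).
Proof.
elim: r s H Hr Hs => [y0|x0 y0 z0 i h q IH] s H Hr Hs /=.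
  by rewrite cmp_id_l (proof_irrelevance _ H Hs).
by rewrite (IH s (proj2 H) (proj2 Hr) Hs) cmp_assoc (proof_irrelevance _ (proj1 H) (proj1 Hr)).
Qed.

Lemma vedge_hom_square (i j : 'I_n) (a b c d : ob AC) (x1 : hom AC a b)
    (y2 : hom AC b d) (y1 : hom AC a c) (x2 : hom AC c d) (sq : cmp y2 x1 = cmp x2 y1)
    (hx1 : vsub C i x1) (hx2 : vsub C i x2) (hy1 : vsub C j y1) (hy2 : vsub C j y2) :
  cmp (vedge_hom hy2) (vedge_hom hx1) = cmp (vedge_hom hx2) (vedge_hom hy1).
Proof.
case: (eqVneq i j) => [eij|nij]; last first.
  by apply: edge_hom_square sq _ _ _ _; apply: contra nij => /eqP /vidx_inj ->.
subst j.
have hz1 : csub (vidx i) (cmp y2 x1) by apply/csub_vidx; apply: vsub_cmp.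
have hz2 : csub (vidx i) (cmp x2 y1) by apply/csub_vidx; apply: vsub_cmp.
rewrite /vedge_hom -(edge_hom_cmp f _ _ hz1) -(edge_hom_cmp f _ _ hz2).
by move: hz1; rewrite sq => hz1; rewrite (proof_irrelevance _ hz1 hz2).
Qed.

Lemma sqrel_path_image x y (P Q : Defs.path n AC x y) :
  sqrel (vsub C) P Q -> forall HP HQ, path_image (P := P) HP = path_image (P := Q) HQ.
Proof.
elim=> {x y P Q}.
- by move=> x y p HP HQ; rewrite (proof_irrelevance _ HP HQ).
- by move=> x y p q _ IH HP HQ; rewrite (IH HQ HP).
- move=> x y p q r pq IH1 _ IH2 HP HR.
  have HQ : pvalid (vsub C) q by apply/(sqrel_pvalid pq).
  by rewrite (IH1 HP HQ) (IH2 HQ HR).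
- by move=> x i [H1 H2] HQ /=; rewrite /vedge_hom edge_hom_id cmp_id_l.
- move=> a b c d i j x1 y2 y1 x2 hx1 hx2 hy1 hy2 sq HP HQ /=.
  by rewrite !cmp_id_r; apply: vedge_hom_square.
- move=> x y z t r p q s _ IH HP HQ.
  have [Hr /pvalid_pcat [Hp Hs]] := proj1 (pvalid_pcat _ _) HP.
  have [_ /pvalid_pcat [Hq _]] := proj1 (pvalid_pcat _ _) HQ.
  rewrite (path_image_pcat HP Hr (proj2 (pvalid_pcat _ _) (conj Hp Hs))).
  rewrite (path_image_pcat HQ Hr (proj2 (pvalid_pcat _ _) (conj Hq Hs))).
  by rewrite !(path_image_pcat _ _ Hs) (IH Hp Hq).
Qed.

(* Condition (ii) on [C] makes the image of a factorization independent of
   the factorization chosen. *)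
Definition lift_hom x y (h : hom AC x y) : hom AD (lift_ob x) (lift_ob y) :=
  let P := constructive_indefinite_description _ (rc_gen h) in
  path_image (proj1 (proj2_sig P)).

Lemma lift_hom_path x y (P : Defs.path n AC x y) HP :
  lift_hom (peval P) = path_image (P := P) HP.
Proof.
rewrite /lift_hom; case: constructive_indefinite_description => Q [HQ EQ] /=.
by apply: sqrel_path_image; apply: rc_rel => //; rewrite EQ.
Qed.

Lemma lift_hom_id x : lift_hom (idm x) = idm (lift_ob x).
Proof. exact: (@lift_hom_path x x (pnil x) I). Qed.

Lemma lift_hom_cmp x y z (h1 : hom AC x y) (h2 : hom AC y z) :
  lift_hom (cmp h2 h1) = cmp (lift_hom h2) (lift_hom h1).
Proof.
have [P1 [HP1 <-]] := rc_gen h1; have [P2 [HP2 <-]] := rc_gen h2.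
have HP : pvalid (vsub C) (pcat P2 P1) by apply/pvalid_pcat.
by rewrite -peval_pcat !(lift_hom_path _) (path_image_pcat HP HP2 HP1).
Qed.

Lemma lift_hom_v (i : 'I_n) x y (h : hom AC x y) (hv : vsub C i h) :
  lift_hom h = vedge_hom hv.
Proof.
have HP : pvalid (vsub C) (pcons i h (pnil x)) by [].
have := lift_hom_path HP; rewrite /= cmp_id_r => ->.
by rewrite cmp_id_r (proof_irrelevance _ (proj1 HP) hv).
Qed.

Lemma coord_cases (k : 'I_n.+1) : (exists i, k = vidx i) \/ k = qidx n.
Proof.
case: (ltnP k n) => hk; first by left; exists (Ordinal hk); apply: val_inj.
by right; apply: val_inj => /=; apply/eqP; rewrite eqn_leq hk -ltnS ltn_ord.
Qed.

(* The hypothesis [0 < n] enters here: a map of [w] is also a map of some [v_i]. *)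
Lemma lift_hom_edge k x y (h : hom AC x y) (hk : csub k h) : lift_hom h = edge_hom f hk.
Proof.
case: (coord_cases k) => [[i ->] | ->] in hk *.
  rewrite (lift_hom_v (proj1 (csub_vidx i h) hk)) /vedge_hom.
  by congr edge_hom; apply: proof_irrelevance.
have hv : vsub C (Ordinal hn) h by apply: wsub_vsub; apply/csub_qidx.
by rewrite (lift_hom_v hv); symmetry; apply: edge_hom_qidx.
Qed.

Lemma csub_mkA k (x y x' y' : ob AD) (h : hom AD x y) (h' : hom AD x' y') :
  mkA h = mkA h' -> csub k h -> csub k h'.
Proof. by move=> E; case: (mkA_eq_ob E) => ex ey; subst; rewrite (mkA_inj E). Qed.

Lemma edge_hom_csub k x y (h : hom AC x y) (hk : csub k h) : csub k (edge_hom f hk).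
Proof.
apply: (csub_mkA (esym (mkA_edge_hom f hk))).
exact: shom_csub (@axis_vert_off _ _ k 0 1).
Qed.

Definition unnerve : relfun C D.
Proof.
refine (@RelFun n C D lift_ob lift_hom lift_hom_id lift_hom_cmp _ _).
- move=> i x y h hv; apply/csub_vidx; rewrite (lift_hom_edge (proj2 (csub_vidx i h) hv)).
  exact: edge_hom_csub.
- move=> x y h hw; apply/csub_qidx; rewrite (lift_hom_edge (proj2 (csub_qidx h) hw)).
  exact: edge_hom_csub.
Defined.

End Unnerve.

Section UnnerveNerve.
Variable n : nat.
Hypothesis hn : (0 < n)%N.
Variables (C D : RelCat n) (f : smap (nerve C) (nerve D)).
Variables (p : midx n) (s : simplex C p).

Lemma sarr_smf_edge_lift (k : 'I_n.+1) (w0 w1 : vert p) (H : vle w0 w1) :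
  (forall j, j != k -> w0 j = w1 j) -> sarr (smf f s) H = mkA (lift_hom f (shom s H)).
Proof. by move=> Hk; rewrite (lift_hom_edge hn f (shom_csub s H Hk)); apply: sarr_smf_edge. Qed.

(* [u <= v] is reached from [u] by moving one coordinate at a time: the
   [m]-th vertex agrees with [v] below coordinate [m] and with [u] above. *)
Section Stair.
Variables (u v : vert p).
Hypothesis Huv : vle u v.

Definition stair_vert (m : nat) : vert p := fun j => if (j < m)%N then v j else u j.

Lemma stair_vert0 : stair_vert 0 = u.
Proof. exact: functional_extensionality_dep. Qed.

Lemma stair_vertN : stair_vert n.+1 = v.
Proof. by apply: functional_extensionality_dep => j; rewrite /stair_vert ltn_ord. Qed.

Lemma vle_stair_vert m : vle u (stair_vert m).
Proof. by apply/forallP => j; rewrite /stair_vert; case: ifP => // _; apply: vle_at. Qed.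

Lemma vle_stair_vertS m : vle (stair_vert m) (stair_vert m.+1).
Proof.
apply/forallP => j; rewrite /stair_vert; have hj := vle_at j Huv.
case: (ltnP j m) => [jm | mj]; first by rewrite ltnS (ltnW jm).
by case: ifP.
Qed.

Lemma stair_vertS_off m : (m < n.+1)%N ->
  forall j, j != inord m -> stair_vert m j = stair_vert m.+1 j.
Proof.
move=> hm j ne; have jm : (j != m :> nat).
  by apply: contra ne => /eqP ej; apply/eqP/val_inj; rewrite /= inordK -ej.
by rewrite /stair_vert ltn_neqAle jm ltnS.
Qed.

Lemma sarr_smf_stair m : (m <= n.+1)%N -> forall H : vle u (stair_vert m),
  sarr (smf f s) H = mkA (lift_hom f (shom s H)).
Proof.
elim: m => [_|m IH hm].
  rewrite stair_vert0 => H.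
  by rewrite shom_id lift_hom_id sarr_id (sob_smf f s).
move=> H; have H1 := vle_stair_vert m; have H2 := vle_stair_vertS m.
rewrite (shom_cmp s H1 H2 H) lift_hom_cmp.
apply: composite_uniq (sarr_cmp (smf f s) H1 H2 H) _.
rewrite (IH (ltnW hm) H1) (sarr_smf_edge_lift H2 (stair_vertS_off hm)).
exact: composite_mkA.
Qed.

End Stair.

Lemma nerve_map_unnerve : smf (nerve_map (unnerve hn f)) s = smf f s.
Proof.
apply: simplex_eq_sarr => u v H.
by have := sarr_smf_stair H (leqnn _); rewrite stair_vertN => ->.
Qed.

End UnnerveNerve.

(** * The unit at a nerve *)

Section NerveFunctor.
Variable n : nat.

Definition relfun_comp (A B E : RelCat n) (G : relfun B E) (F : relfun A B) : relfun A E.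
Proof.
refine (@RelFun n A E (fun x => fob G (fob F x)) (fun x y h => fhom G (fhom F h)) _ _ _ _).
- by move=> x; rewrite !fhom_id.
- by move=> x y z h1 h2; rewrite !fhom_cmp.
- by move=> i x y h hv; do 2 apply: fhom_v.
- by move=> x y h hw; do 2 apply: fhom_w.
Defined.

Definition relfun_id (A : RelCat n) : relfun A A.
Proof. by refine (@RelFun n A A (fun x => x) (fun x y h => h) _ _ _ _). Defined.

Definition smap_id (X : sSet n) : smap X X :=
  @SMap n X X (fun p x => x) (fun p p' a x => erefl).

Lemma nerve_map_comp (A B E : RelCat n) (G : relfun B E) (F : relfun A B) (p : midx n)
    (s : simplex A p) :
  smf (nerve_map G) (smf (nerve_map F) s) = smf (nerve_map (relfun_comp G F)) s.
Proof. exact: simplex_eq_sarr. Qed.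

Lemma nerve_map_id (A : RelCat n) (p : midx n) (s : simplex A p) :
  smf (nerve_map (relfun_id A)) s = s.
Proof. exact: simplex_eq_sarr. Qed.

(* The map [eps] with [N eps . eta = id] is the inverse: [iota . eps] and
   the identity both factor [eta] through itself, hence agree. *)
Lemma unit_nerve_is_iso (C KC : RelCat n) (eta : smap (nerve C) (nerve KC))
    (iota : relfun C KC) :
  unit_universal eta -> (forall p (s : simplex C p), smf (nerve_map iota) s = smf eta s) ->
  is_iso eta.
Proof.
move=> univ iotaE.
have [eps [epsK _]] := univ C (smap_id (nerve C)).
have [g [_ g_uniq]] := univ KC eta.
have iota_eps : relfun_comp iota eps = g.
  by apply: g_uniq => p s; rewrite -nerve_map_comp epsK iotaE.
have id_g : relfun_id KC = g by apply: g_uniq => p s; rewrite nerve_map_id.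
exists (nerve_map eps); split=> [p s | p t]; first exact: epsK.
by rewrite -iotaE nerve_map_comp iota_eps -id_g nerve_map_id.
Qed.

End NerveFunctor.

Theorem proposition4p5 (n : nat) (hn : (0 < n)%N)
  (K : sSet n -> RelCat n)
  (eta : forall X : sSet n, smap X (nerve (K X)))
  (HK : forall X : sSet n, unit_universal (eta X))
  (C : RelCat n) :
  is_iso (eta (nerve C)).
Proof.
apply: (unit_nerve_is_iso (iota := unnerve hn (eta (nerve C)))); first exact: HK.
exact: nerve_map_unnerve.
Qed.
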